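(* Let $P$ be an infinite field and $W(X)$ the free associative (unital) algebra over $P$ on a finite set $X=\{x_1,\ldots,x_n\}$. Let $\mu:W(X)\to W(X)$ be a bijection generating an automorphism $\tau$ of the semigroup $\mathrm{End}(W(X))$ (i.e. $\tau(s)=\mu s\mu^{-1}$ for all $s$), such that $\mu(a)=a$ for all $a\in P$ and $\mu(x_i)=x_i$ for all $i$. Then either $\mu(uv)=\mu(u)\mu(v)$ for all $u,v\in W(X)$, or $\mu(uv)=\mu(v)\mu(u)$ for all $u,v\in W(X)$.
   Context: $\mathrm{End}(W(X))$ is the semigroup of all $P$-algebra endomorphisms of $W(X)$. *)

From HB Require Import structures.
From mathcomp Require Import all_boot all_order all_algebra.
From mathcomp Require Import monalg.
Set Implicit Arguments.
Unset Strict Implicit.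
Unset Printing Implicit Defensive.
Import GRing.Theory.
Local Open Scope ring_scope.

(* W(X): the free associative unital P-algebra on X = {x_0,...,x_(n-1)},
   i.e. the monoid algebra of the free monoid on 'I_n. *)
Definition W (P : fieldType) (n : nat) := {malg P[{fmonom 'I_n}]}.

Definition gen (P : fieldType) (n : nat) (i : 'I_n) : W P n :=
  mkmalgU (fmu i) 1.

Definition is_alg_endo (P : fieldType) (n : nat) (s : W P n -> W P n) : Prop :=
  [/\ forall (a : P) (u v : W P n), s (a *: u + v) = a *: s u + s v,
      forall u v : W P n, s (u * v) = s u * s v
    & s 1 = 1].

Definition infinite_type (T : eqType) : Prop := forall s : seq T, exists x, x \notin s.

From HB Require Import structures.
From mathcomp Require Import all_boot all_order all_algebra.
From mathcomp Require Import finmap monalg.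
Set Implicit Arguments.
Unset Strict Implicit.
Unset Printing Implicit Defensive.
Import GRing.Theory.
Local Open Scope ring_scope.

(** Conjugation by [mu] turns the endomorphism [x_i |-> w_i] of W into
  [x_i |-> mu w_i]. Applied to the substitutions [x_j |-> x_j] and
  [x_j |-> a] (other generators sent to 0), this shows, as P is infinite,
  that [mu] fixes every polynomial in a single generator; hence [mu] commutes
  with scalars and [mu (u v)] is obtained from [m = mu (x_0 x_1)] by
  substituting [mu u], [mu v] for [x_0], [x_1]. The diagonal substitutions
  [x_0 |-> a x_0], [x_1 |-> b x_1] multiply [m] by [a b], which forces
  [m = alpha x_0 x_1 + beta x_1 x_0], i.e.
  [mu (u v) = alpha mu(u) mu(v) + beta mu(v) mu(u)]. Comparing [mu (x_0^2)]
  and the two bracketings of [x_0 x_0 x_1] gives [alpha + beta = 1] and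
  [alpha^2 = alpha]. With fewer than two generators [mu] is the identity. *)

Lemma malgUM (K : monomType) (R : nzRingType) (k1 k2 : K) :
  << k1 >> * << k2 >> = << mmul k1 k2 >> :> {malg R[K]}.
Proof. by rewrite malgM_def fgmulUU mulr1. Qed.

Lemma malg_supp2E (K : choiceType) (R : nzRingType) (g : {malg R[K]}) (k1 k2 : K) :
  k1 != k2 -> (forall k, g@_k != 0 -> k = k1 \/ k = k2) ->
  g = g@_k1 *: << k1 >> + g@_k2 *: << k2 >>.
Proof.
move=> k12 g_supp; apply/malgP => k; rewrite mcoeffD !mcoeffZ !mcoeffU.
have [->|k_k1] := eqVneq k k1; first by rewrite eq_sym (negbTE k12) mulr1 mulr0 addr0.
have [->|k_k2] := eqVneq k k2; first by rewrite mulr1 mulr0 add0r.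
rewrite !mulr0 addr0; apply/eqP; apply: contraT => /g_supp[] k_eq.
  by rewrite k_eq eqxx in k_k1.
by rewrite k_eq eqxx in k_k2.
Qed.

Lemma malg_trivial_monoid (K : monomType) (R : nzRingType) :
  (forall k : K, k = mone) -> forall g : {malg R[K]}, g = (g@_mone)%:A.
Proof. by move=> K1 g; apply/malgP => k; rewrite (K1 k) mcoeffZ mcoeff1 eqxx mulr1. Qed.

Section MalgComRing.
Variables (K : monomType) (R : comNzRingType).
Implicit Types (c : R) (k : K) (x y : {malg R[K]}).

Lemma malgZU c k : << c *g k >> = c *: (<< k >> : {malg R[K]}).
Proof. by apply/malgP => k'; rewrite mcoeffZ !mcoeffU mulr_natr. Qed.

Lemma malg_mulr_algr c x : x * c%:A = c *: x.
Proof.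
rewrite -mpolyC1E -malgZU malgM_def fgmulgU malgZ_def /fgscale.
by apply: eq_bigr => k _; rewrite mulm1 mulrC.
Qed.

Lemma malg_scalerAr c x y : c *: (x * y) = x * (c *: y).
Proof. by rewrite -[c *: y]mulr_algl mulrA malg_mulr_algr scalerAl. Qed.

End MalgComRing.

(* HB does not find monalg's [lalgType] instance on [malg K R] for a merely
   commutative [R], so the algebra structure is declared on [W] itself. *)
HB.instance Definition _ (P : fieldType) (n : nat) := GRing.Lalgebra.on (W P n).
HB.instance Definition _ (P : fieldType) (n : nat) :=
  GRing.Lalgebra_isAlgebra.Build P (W P n) (@malg_scalerAr _ P).

Lemma infinite_uniq_seq (T : eqType) (N : nat) :
  infinite_type T -> exists s : seq T, uniq s /\ size s = N.
Proof.
move=> T_inf; elim: N => [|N [s [s_uniq <-]]]; first by exists [::].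
by have [x x_s] := T_inf s; exists (x :: s); rewrite /= x_s s_uniq.
Qed.

Lemma poly_infinite_eq (R : idomainType) (p q : {poly R}) :
  infinite_type R -> (forall a, p.[a] = q.[a]) -> p = q.
Proof.
move=> R_inf pq; apply/eqP; rewrite -subr_eq0; apply/eqP.
have [s [s_uniq s_size]] := infinite_uniq_seq (size (p - q)) R_inf.
apply: roots_geq_poly_eq0 s_uniq _; last by rewrite s_size.
by apply/allP => a _; rewrite rootE !hornerE pq subrr.
Qed.

Lemma exprn_id_eq1 (R : idomainType) (c : nat) :
  infinite_type R -> (forall a : R, a ^+ c = a) -> c = 1%N.
Proof.
move=> R_inf c_id.
have Xc : 'X^c = 'X :> {poly R}.
  by apply: poly_infinite_eq R_inf _ => a; rewrite hornerXn hornerX.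
by have := congr1 (size \o polyseq) Xc; rewrite /= size_polyXn size_polyX => -[].
Qed.

Section SkewMorphism.
Variables (R : idomainType) (A : algType R) (f : A -> A) (a b : R).
Hypothesis f_mul : forall u v, f (u * v) = a *: (f u * f v) + b *: (f v * f u).

Section Coefficients.
Variable phi : A -> R.
Hypothesis phiD : {morph phi : u v / u + v}.
Hypothesis phiZ : forall c u, phi (c *: u) = c * phi u.
Variables (y z : A).
Hypotheses (fy : f y = y) (fz : f z = z) (fyy : f (y * y) = y * y).

Lemma skew_morph_coef_sum : phi (y * y) = 1 -> a + b = 1.
Proof.
move=> phi_yy; have := congr1 phi (f_mul y y).
by rewrite fyy fy -scalerDl phiZ phi_yy mulr1 => <-.
Qed.

Lemma skew_morph_coef_idem :
  phi (y * y * z) = 1 -> phi (y * z * y) = 0 -> phi (z * y * y) = 0 -> a * a = a.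
Proof.
move=> phi_yyz phi_yzy phi_zyy.
have := congr1 (phi \o f) (mulrA y y z).
rewrite /= [f (_ * z)]f_mul fyy fz f_mul fy [f (y * z)]f_mul fy fz.
rewrite mulrDr mulrDl -!scalerAr -!scalerAl !scalerDr !scalerA !mulrA.
by rewrite !phiD !phiZ phi_yyz phi_yzy phi_zyy !mulr0 !mulr1 !addr0 => ->.
Qed.

End Coefficients.

Lemma skew_morph_cases :
  a + b = 1 -> a * a = a ->
  (forall u v, f (u * v) = f u * f v) \/ (forall u v, f (u * v) = f v * f u).
Proof.
move=> ab1 aa.
have /eqP : a * (a - 1) = 0 by rewrite mulrBr mulr1 aa subrr.
rewrite mulf_eq0 subr_eq0 => /orP[/eqP a0 | /eqP a1].
  right=> u v; move: ab1; rewrite f_mul a0 add0r => ->.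
  by rewrite scale0r add0r scale1r.
left=> u v; move: ab1; rewrite f_mul a1 -{2}[1]addr0 => /addrI ->.
by rewrite scale0r addr0 scale1r.
Qed.

End SkewMorphism.

Definition monom_eval (n : nat) (R : pzRingType) (w : 'I_n -> R) (k : fmonom 'I_n) : R :=
  \prod_(i <- k) w i.

Lemma monom_eval_is_mmorphism (n : nat) (R : nzRingType) (w : 'I_n -> R) :
  mmorphism (monom_eval w).
Proof. by split=> [k1 k2|]; rewrite /monom_eval ?fmM ?big_cat // fm1 big_nil. Qed.

HB.instance Definition _ (n : nat) (R : nzRingType) (w : 'I_n -> R) :=
  isMultiplicative.Build _ _ (monom_eval w) (monom_eval_is_mmorphism w).

Section FreeAlgebra.
Variables (P : fieldType) (n : nat).
Local Notation W := (W P n).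
Local Notation x_ := (gen P).

Lemma malgU_fmonom (k : fmonom 'I_n) : << k >> = \prod_(i <- k) x_ i :> W.
Proof.
case: k => s; elim: s => [|i s IH].
  by rewrite big_nil -mpolyC1E; congr << _ >>; apply/eqP; rewrite fmP fm1.
rewrite big_cons -IH /gen malgUM; congr << _ >>.
by apply/eqP; rewrite fmP fmM fmU.
Qed.

Lemma gen_mul2 (i j : 'I_n) : x_ i * x_ j = << FMonom [:: i; j] >>.
Proof. by rewrite malgU_fmonom /= !big_cons big_nil mulr1. Qed.

Lemma gen_mul3 (i j k : 'I_n) : x_ i * x_ j * x_ k = << FMonom [:: i; j; k] >>.
Proof. by rewrite malgU_fmonom /= !big_cons big_nil mulr1 mulrA. Qed.

Lemma mcoeff_word (s t : seq 'I_n) : (<< FMonom s >> : W)@_(FMonom t) = (s == t)%:R.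
Proof. by rewrite mcoeffU1 fmP. Qed.

(* [is_alg_endo] is the case [R := W]; the polynomial codomain is used for [to_poly]. *)
Definition alg_morph (R : lalgType P) (F : W -> R) : Prop :=
  [/\ forall (a : P) (u v : W), F (a *: u + v) = a *: F u + F v,
      forall u v : W, F (u * v) = F u * F v
    & F 1 = 1].

Section AlgMorph.
Variables (R : lalgType P) (F : W -> R).
Hypothesis F_morph : alg_morph F.

Lemma alg_morphD : {morph F : u v / u + v}.
Proof. by case: F_morph => FZD _ _ u v; rewrite -[u]scale1r FZD !scale1r. Qed.

Lemma alg_morph0 : F 0 = 0.
Proof. by apply/(addrI (F 0)); rewrite -alg_morphD !addr0. Qed.

Lemma alg_morphZ (a : P) u : F (a *: u) = a *: F u.
Proof. by case: F_morph => FZD _ _; rewrite -[a *: u]addr0 FZD alg_morph0 addr0. Qed.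

Lemma alg_morphM : {morph F : u v / u * v}.
Proof. by case: F_morph. Qed.

Lemma alg_morph1 : F 1 = 1.
Proof. by case: F_morph. Qed.

Lemma alg_morph_expand u :
  F u = \sum_(k <- msupp u) u@_k *: \prod_(i <- k) F (x_ i).
Proof.
rewrite {1}[u]monalgE (big_morph F alg_morphD alg_morph0).
apply: eq_bigr => k _; rewrite malgZU malgU_fmonom alg_morphZ.
by rewrite (big_morph F alg_morphM alg_morph1).
Qed.

End AlgMorph.

Lemma alg_morph_eq (R : lalgType P) (F G : W -> R) :
  alg_morph F -> alg_morph G -> (forall i, F (x_ i) = G (x_ i)) -> F =1 G.
Proof.
move=> F_morph G_morph FG u.
rewrite (alg_morph_expand F_morph) (alg_morph_expand G_morph).
by apply: eq_bigr => k _; congr (_ *: _); apply: eq_bigr => i _.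
Qed.

Lemma alg_morph_comp (R S : lalgType P) (F : W -> R) (G : {rmorphism R -> S}) :
  scalable G -> alg_morph F -> alg_morph (G \o F).
Proof.
move=> GZ F_morph; split=> [a u v|u v|] /=.
- by rewrite (alg_morphD F_morph) (alg_morphZ F_morph) rmorphD GZ.
- by rewrite (alg_morphM F_morph) rmorphM.
- by rewrite (alg_morph1 F_morph) rmorph1.
Qed.

Definition subst (R : lalgType P) (w : 'I_n -> R) : W -> R :=
  mmap (in_alg R) (monom_eval w).

Lemma subst_alg_morph (R : algType P) (w : 'I_n -> R) : alg_morph (subst w).
Proof.
have subst_mult := commr_mmap_is_multiplicative (fun _ _ _ => comm_alg _ _)
  (f := in_alg R) (h := monom_eval w).
split=> [a u v|u v|]; rewrite /subst.
- by rewrite mmapD mmapZ /= mulr_algl.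
- by rewrite subst_mult.1.
- by rewrite mmap1.
Qed.

Section SubstAlg.
Variables (R : algType P) (w : 'I_n -> R).

Lemma substD : {morph subst w : u v / u + v}.
Proof. exact: alg_morphD (subst_alg_morph w). Qed.

Lemma substZ (a : P) u : subst w (a *: u) = a *: subst w u.
Proof. exact: (alg_morphZ (subst_alg_morph w)). Qed.

Lemma substM : {morph subst w : u v / u * v}.
Proof. exact: alg_morphM (subst_alg_morph w). Qed.

End SubstAlg.

Lemma subst_gen (R : lalgType P) (w : 'I_n -> R) i : subst w (x_ i) = w i.
Proof. by rewrite /subst mmapU /= scale1r mul1r /monom_eval fmU big_seq1. Qed.

Lemma eq_subst (R : lalgType P) (w1 w2 : 'I_n -> R) :
  w1 =1 w2 -> subst w1 =1 subst w2.
Proof.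
move=> w12 u; rewrite /subst !mmapE; apply: eq_bigr => k _.
by congr (_ * _); apply: eq_bigr.
Qed.

Lemma subst_id : subst (@gen P n) =1 id.
Proof. by apply: alg_morph_eq (subst_alg_morph _) _ _ => [|i]; rewrite ?subst_gen. Qed.

Lemma mcoeff_subst_scale (d : 'I_n -> P) (u : W) k :
  (subst (fun i => d i *: x_ i) u)@_k = (\prod_(i <- k) d i) * u@_k.
Proof.
rewrite (alg_morph_expand (subst_alg_morph _)) [in RHS](monalgE u) !raddf_sum.
rewrite mulr_sumr; apply: eq_bigr => k' _ /=.
under eq_bigr do rewrite subst_gen.
rewrite scaler_prod -malgU_fmonom mcoeffZ mcoeffZ mcoeffU mcoeffU1.
by case: eqP => [->|_]; rewrite ?mulr0 // mulr1 mulrC.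
Qed.

Definition gen_to (R : pzRingType) (j : 'I_n) (r : R) (i : 'I_n) : R :=
  if i == j then r else 0.

Definition to_poly (j : 'I_n) : W -> {poly P} := subst (gen_to j 'X).

Lemma horner_algZ (R : algType P) (r : R) : scalable (horner_alg r).
Proof. by move=> a p; rewrite linearZ /= mulr_algl. Qed.

Lemma subst_gen_to (R : algType P) j (r : R) u :
  subst (gen_to j r) u = horner_alg r (to_poly j u).
Proof.
symmetry; apply: (alg_morph_eq (alg_morph_comp (horner_algZ r) (subst_alg_morph _))
  (subst_alg_morph _)) => i /=.
by rewrite !subst_gen /gen_to; case: eqP => _; rewrite ?horner_algX ?rmorph0.
Qed.

Lemma horner_alg_scalar (R : algType P) (a : P) (p : {poly P}) :
  horner_alg (a%:A : R) p = (p.[a])%:A.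
Proof. exact: horner_map. Qed.

End FreeAlgebra.

Section PairOfIndices.
Variables (n : nat) (i0 i1 : 'I_n).
Hypothesis i01 : i0 != i1.

Definition pair_to (R : pzRingType) (a b : R) (i : 'I_n) : R :=
  if i == i0 then a else if i == i1 then b else 0.

Lemma pair_to0 (R : pzRingType) (a b : R) : pair_to a b i0 = a.
Proof. by rewrite /pair_to eqxx. Qed.

Lemma pair_to1 (R : pzRingType) (a b : R) : pair_to a b i1 = b.
Proof. by rewrite /pair_to eq_sym (negbTE i01) eqxx. Qed.

Lemma prod_pair_to (R : comPzRingType) (a b : R) (k : seq 'I_n) :
  \prod_(i <- k) pair_to a b i =
  if all (mem [:: i0; i1]) k then a ^+ count_mem i0 k * b ^+ count_mem i1 k else 0.
Proof.
elim: k => [|i k IHk]; first by rewrite big_nil /= !expr0 mulr1.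
rewrite big_cons IHk /= !inE.
have [->|i_i0] := eqVneq i i0.
  by rewrite pair_to0 (negbTE i01) /=; case: ifP; rewrite ?mulr0 // exprS mulrA.
have [->|i_i1] := eqVneq i i1; last by rewrite /pair_to (negbTE i_i0) (negbTE i_i1) mul0r.
by rewrite pair_to1 /=; case: ifP; rewrite ?mulr0 // exprS mulrCA mulrA.
Qed.

Lemma size_pair_seq (k : seq 'I_n) : all (mem [:: i0; i1]) k ->
  size k = (count_mem i0 k + count_mem i1 k)%N.
Proof.
rewrite all_count => /eqP <-; rewrite -count_predUI.
rewrite [count (predI _ _) _](@eq_count _ _ pred0) ?count_pred0 ?addn0; last first.
  by move=> i /=; apply/andP => -[/eqP-> /eqP i01E]; move: i01; rewrite i01E eqxx.
by apply: eq_count => i; rewrite /= !inE.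
Qed.

Lemma prod_pair_to_eq_mul (R : idomainType) (k : seq 'I_n) : infinite_type R ->
  (forall a b : R, \prod_(i <- k) pair_to a b i = a * b) ->
  k = [:: i0; i1] \/ k = [:: i1; i0].
Proof.
move=> R_inf k_mul.
have k01 : all (mem [:: i0; i1]) k.
  apply: contraT => /negbTE k_not; have := k_mul 1 1.
  by rewrite prod_pair_to k_not mulr1 => /eqP; rewrite eq_sym oner_eq0.
have count0 : count_mem i0 k = 1%N.
  apply: (exprn_id_eq1 R_inf) => a.
  by have := k_mul a 1; rewrite prod_pair_to k01 expr1n !mulr1.
have count1 : count_mem i1 k = 1%N.
  apply: (exprn_id_eq1 R_inf) => b.
  by have := k_mul 1 b; rewrite prod_pair_to k01 expr1n !mul1r.
have size_k := size_pair_seq k01; rewrite count0 count1 in size_k.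
have i10 : (i1 == i0) = false by rewrite eq_sym (negbTE i01).
case: k size_k k_mul k01 count0 count1 => [|x [|y []]] //= _ _.
rewrite !inE !andbT => /andP[] /orP[]/eqP-> /orP[]/eqP->;
  rewrite ?eqxx ?(negbTE i01) ?i10 //; by [left | right].
Qed.

End PairOfIndices.

Section Conjugation.
Variables (P : fieldType) (n : nat) (mu : W P n -> W P n).
Local Notation W := (W P n).
Local Notation x_ := (gen P).
Hypothesis mu_endo :
  forall s, is_alg_endo s -> exists t, is_alg_endo t /\ mu \o s =1 t \o mu.
Hypothesis mu_alg : forall a : P, mu a%:A = a%:A.
Hypothesis mu_gen : forall i, mu (x_ i) = x_ i.

Lemma mu_subst (w : 'I_n -> W) u : mu (subst w u) = subst (mu \o w) (mu u).
Proof.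
have [t [t_morph mu_t]] := mu_endo (subst_alg_morph w).
have t_subst : t =1 subst (mu \o w).
  apply: (alg_morph_eq t_morph (subst_alg_morph _)) => i.
  by have := mu_t (x_ i); rewrite /= mu_gen !subst_gen => <-.
by rewrite -t_subst; apply: mu_t.
Qed.

Lemma mu_subst_fixed (w : 'I_n -> W) u :
  (forall i, mu (w i) = w i) -> mu (subst w u) = subst w (mu u).
Proof. by move=> mu_w; rewrite mu_subst; apply: eq_subst. Qed.

Lemma mu0 : mu 0 = 0.
Proof. by have := mu_alg 0; rewrite scale0r. Qed.

Lemma mu_gen_to (j : 'I_n) (r : W) : mu r = r -> forall i, mu (gen_to j r i) = gen_to j r i.
Proof. by move=> mu_r i; rewrite /gen_to; case: eqP; rewrite ?mu0. Qed.

Hypothesis P_inf : infinite_type P.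

Lemma mu_univariate (j : 'I_n) u : subst (gen_to j (x_ j)) u = u -> mu u = u.
Proof.
move=> u_j.
have to_poly_mu : to_poly j (mu u) = to_poly j u.
  apply: poly_infinite_eq P_inf _ => a; apply: (fmorph_inj (in_alg W)) => /=.
  rewrite -!horner_alg_scalar -!subst_gen_to -mu_subst_fixed; last exact/mu_gen_to/mu_alg.
  by rewrite subst_gen_to horner_alg_scalar mu_alg.
by rewrite -u_j mu_subst_fixed ?subst_gen_to ?to_poly_mu //; apply/mu_gen_to/mu_gen.
Qed.

Lemma mu_scale_gen j (c : P) : mu (c *: x_ j) = c *: x_ j.
Proof. by apply: (mu_univariate (j := j)); rewrite substZ subst_gen /gen_to eqxx. Qed.

Lemma mu_sqr_gen j : mu (x_ j * x_ j) = x_ j * x_ j.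
Proof. by apply: (mu_univariate (j := j)); rewrite substM subst_gen /gen_to eqxx. Qed.

Lemma muZ (j : 'I_n) (c : P) u : mu (c *: u) = c *: mu u.
Proof.
have cxj_u : subst (gen_to j u) (c *: x_ j) = c *: u.
  by rewrite substZ subst_gen /gen_to eqxx.
by rewrite -{}cxj_u mu_subst mu_scale_gen substZ subst_gen /= /gen_to eqxx.
Qed.

Section TwoGenerators.
Variables (i0 i1 : 'I_n).
Hypothesis i01 : i0 != i1.

Local Notation m := (mu (x_ i0 * x_ i1)).
Local Notation pair_to := (pair_to i0 i1).

Definition alpha := m@_(FMonom [:: i0; i1]).
Definition beta := m@_(FMonom [:: i1; i0]).

Lemma mu_mul_subst u v : mu (u * v) = subst (pair_to (mu u) (mu v)) m.
Proof.
have uv : subst (pair_to u v) (x_ i0 * x_ i1) = u * v.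
  by rewrite substM !subst_gen pair_to0 (pair_to1 i01).
rewrite -{}uv mu_subst; apply: eq_subst => i /=.
by rewrite /pair_to; case: eqP => _; last case: eqP => _; rewrite ?mu0.
Qed.

Lemma mu_gen_mul_bihomogeneous (a b : P) :
  subst (fun i => pair_to a b i *: x_ i) m = (a * b) *: m.
Proof.
have ab : subst (fun i => pair_to a b i *: x_ i) (x_ i0 * x_ i1) = (a * b) *: (x_ i0 * x_ i1).
  by rewrite substM !subst_gen pair_to0 (pair_to1 i01) -scalerAl -scalerAr scalerA.
by rewrite -(muZ i0) -{}ab mu_subst_fixed // => i; apply: mu_scale_gen.
Qed.

Lemma msupp_mu_gen_mul k : m@_k != 0 -> k = FMonom [:: i0; i1] \/ k = FMonom [:: i1; i0].
Proof.
move=> mk_neq0.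
have prod_k (a b : P) : \prod_(i <- k) pair_to a b i = a * b.
  apply: (mulIf mk_neq0); have := congr1 (mcoeff k) (mu_gen_mul_bihomogeneous a b).
  by rewrite mcoeff_subst_scale mcoeffZ.
by case: k {mk_neq0} prod_k => s /= /(prod_pair_to_eq_mul i01 P_inf)[]->; [left | right].
Qed.

Lemma mu_gen_mulE : m = alpha *: (x_ i0 * x_ i1) + beta *: (x_ i1 * x_ i0).
Proof.
have words_neq : FMonom [:: i0; i1] != FMonom [:: i1; i0].
  by rewrite fmP /= eqseq_cons (negbTE i01).
by have := malg_supp2E words_neq msupp_mu_gen_mul; rewrite -!gen_mul2.
Qed.

Lemma mu_mul u v : mu (u * v) = alpha *: (mu u * mu v) + beta *: (mu v * mu u).
Proof.
rewrite mu_mul_subst {1}mu_gen_mulE substD.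
by congr (_ + _); rewrite substZ substM !subst_gen pair_to0 (pair_to1 i01).
Qed.

Lemma mu_mul_or_antimul :
  (forall u v, mu (u * v) = mu u * mu v) \/ (forall u v, mu (u * v) = mu v * mu u).
Proof.
pose coef s : W -> P := mcoeff (FMonom s).
have coefZ s (c : P) u : coef s (c *: u) = c * coef s u := mcoeffZ c u _.
have i10 : (i1 == i0) = false by rewrite eq_sym (negbTE i01).
apply: (@skew_morph_cases P _ _ _ _ mu_mul).
- apply: (skew_morph_coef_sum mu_mul (coefZ [:: i0; i0]) (mu_gen i0) (mu_sqr_gen i0)).
  by rewrite /coef gen_mul2 mcoeff_word eqxx.
- apply: (skew_morph_coef_idem mu_mul (mcoeffD _) (coefZ [:: i0; i0; i1])
    (mu_gen i0) (mu_gen i1) (mu_sqr_gen i0));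
  by rewrite /coef gen_mul3 mcoeff_word !eqseq_cons ?eqxx ?i10 ?(negbTE i01) ?andbF.
Qed.

End TwoGenerators.

End Conjugation.

Lemma fmonom0_eq1 (k : fmonom 'I_0) : k = mone.
Proof. by apply/eqP; rewrite fmP fm1; case: k => [[|[]]]. Qed.

Lemma alg_fixed_W0_id (P : fieldType) (mu : W P 0 -> W P 0) :
  (forall a : P, mu a%:A = a%:A) -> mu =1 id.
Proof. by move=> mu_alg u; rewrite [u](malg_trivial_monoid fmonom0_eq1) mu_alg. Qed.

Lemma conj_fixed_W1_id (P : fieldType) (mu : W P 1 -> W P 1) :
  (forall s, is_alg_endo s -> exists t, is_alg_endo t /\ mu \o s =1 t \o mu) ->
  (forall a : P, mu a%:A = a%:A) -> (forall i, mu (gen P i) = gen P i) ->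
  infinite_type P -> mu =1 id.
Proof.
move=> mu_endo mu_alg mu_gen P_inf u.
apply: (mu_univariate mu_endo mu_alg mu_gen P_inf (j := 0)).
by rewrite -[RHS]subst_id; apply: eq_subst => i; rewrite ord1 /gen_to eqxx.
Qed.

Unset Implicit Arguments.

Theorem lemma4p2 (P : fieldType) (n : nat) (mu : W P n -> W P n) :
  infinite_type P ->
  bijective mu ->
  (* tau(s) = mu s mu^-1 maps End(W(X)) into End(W(X)) ... *)
  (forall s, is_alg_endo s -> exists t, is_alg_endo t /\ mu \o s =1 t \o mu) ->
  (* ... and onto End(W(X)) *)
  (forall t, is_alg_endo t -> exists s, is_alg_endo s /\ mu \o s =1 t \o mu) ->
  (forall a : P, mu (a%:A) = a%:A) ->
  (forall i : 'I_n, mu (gen P i) = gen P i) ->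
  (forall u v : W P n, mu (u * v) = mu u * mu v) \/
  (forall u v : W P n, mu (u * v) = mu v * mu u).
Proof.
move=> P_inf _ mu_endo _ mu_alg mu_gen.
case: n mu mu_endo mu_alg mu_gen => [|[|n]] mu mu_endo mu_alg mu_gen.
- by left=> u v; rewrite !(alg_fixed_W0_id mu_alg).
- by left=> u v; rewrite !(conj_fixed_W1_id mu_endo mu_alg mu_gen P_inf).
- exact: (mu_mul_or_antimul mu_endo mu_alg mu_gen P_inf (i0 := ord0) (i1 := ord_max)).
Qed.
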